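(* Let $Q$ be a conjunctive query without self-joins and $A$ a universal attribute of $Q$. Then $Q$ contains a hard structure if and only if $Q_{-A}$ contains a hard structure, where $Q_{-A}$ is obtained by removing $A$ from every relation of $Q$ and from its head.
   Context: CQ $Q(\mathbf{A}) :- R_1(\mathbb{A}_1),\dots,R_p(\mathbb{A}_p)$ with distinct relation symbols, $\mathrm{attr}(R_i)=\mathbb{A}_i$, $\mathrm{attr}(Q)=\bigcup_i\mathbb{A}_i$, $\mathrm{head}(Q)=\mathbf{A}$. An attribute is universal if it is in $\mathrm{head}(Q)$ and in every $\mathbb{A}_i$. Standing assumption: distinct relations have distinct attribute sets. $R_j$ is exogenous if another relation $R_i$ has $\mathrm{attr}(R_i)\subsetneq\mathrm{attr}(R_j)$, endogenous otherwise. A path between relations $R_i,R_j$ using only attributes in a set $S$ is a sequence of relations from $R_i$ to $R_j$ in which consecutive relations share an attribute of $S$. Triad-like structure: three endogenous relations such that for each pair there is a path between them using only attributes in $\mathrm{attr}(Q)\setminus(\mathrm{head}(Q)\cup\mathrm{attr}(R))$, $R$ the third relation. $R_j$ is dominated by $R_i$ if (1) $\mathrm{attr}(R_i)\subseteq\mathrm{attr}(R_j)$; (2) for every $R_k$ with $\mathrm{attr}(R_i)\setminus\mathrm{attr}(R_k)\ne\emptyset$, $\mathrm{attr}(R_j)\cap\mathrm{attr}(R_k)\subseteq\mathrm{attr}(R_i)\cap\mathrm{head}(Q)$; (3) $\mathrm{attr}(R_i)\subseteq\mathrm{head}(Q)$ or $\mathrm{head}(Q)\subseteq\mathrm{attr}(R_i)$;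 non-dominated relations are those dominated by no other relation. Strand: two non-dominated relations $R_i,R_j$ with $\mathrm{head}(Q)\cap\mathrm{attr}(R_i)\ne\mathrm{head}(Q)\cap\mathrm{attr}(R_j)$ and $(\mathrm{attr}(R_i)\cap\mathrm{attr}(R_j))\setminus\mathrm{head}(Q)\ne\emptyset$. The head join of non-dominated relations is the full query formed by the non-dominated relations restricted to $\mathrm{head}(Q)$; a full query is hierarchical if for all attributes $A,B$ the sets of relations containing them are nested or disjoint. $Q$ contains a hard structure if it contains a triad-like structure or a strand, or the head join of its non-dominated relations is non-hierarchical. *)

(* A conjunctive query without self-joins is represented by
   a finite type [Att] of attributes, relations indexed by ['I_p] (distinct
   indices = distinct relation symbols) with attribute sets [rels i], and a
   head attribute set [head]. *)
From mathcomp Require Import all_boot.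
Set Implicit Arguments. Unset Strict Implicit. Unset Printing Implicit Defensive.

Section CQ.
Variables (Att : finType) (p : nat).
Implicit Types (rels : 'I_p -> {set Att}) (head : {set Att}).

Definition attrQ rels : {set Att} := \bigcup_(i < p) rels i.

Definition wf_query rels head : Prop := head \subset attrQ rels.

Definition distinct_attrs rels : Prop := injective rels.

Definition universal rels head (A : Att) : Prop :=
  A \in head /\ forall i, A \in rels i.

Definition exogenous rels (j : 'I_p) : Prop := exists i, rels i \proper rels j.
Definition endogenous rels (j : 'I_p) : Prop := ~ exogenous rels j.

Definition share_in rels (S : {set Att}) : rel 'I_p :=
  fun k l => [exists a in S, (a \in rels k) && (a \in rels l)].

Definition path_using rels (S : {set Att}) (i j : 'I_p) : Prop :=
  connect (share_in rels S) i j.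

Definition avoid rels head (k : 'I_p) : {set Att} :=
  attrQ rels :\: (head :|: rels k).

Definition triad_like rels head : Prop :=
  exists i j k : 'I_p,
    [/\ i != j, j != k & i != k] /\
    [/\ endogenous rels i, endogenous rels j & endogenous rels k] /\
    [/\ path_using rels (avoid rels head k) i j,
        path_using rels (avoid rels head i) j k &
        path_using rels (avoid rels head j) i k].

Definition dominated_by rels head (j i : 'I_p) : bool :=
  [&& rels i \subset rels j,
      [forall k, (rels i :\: rels k != set0) ==>
         (rels j :&: rels k \subset rels i :&: head)] &
      (rels i \subset head) || (head \subset rels i)].

Definition non_dominated rels head (j : 'I_p) : bool :=
  [forall i, (i != j) ==> ~~ dominated_by rels head j i].

Definition strand rels head : Prop :=
  exists i j : 'I_p,
    [/\ non_dominated rels head i, non_dominated rels head j,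
        head :&: rels i != head :&: rels j &
        (rels i :&: rels j) :\: head != set0].

(* the head join: relations R_i ∩ head(Q) for non-dominated R_i.
   The set of its relations containing attribute a: *)
Definition hj_rels_of rels head (a : Att) : {set 'I_p} :=
  [set i | non_dominated rels head i && (a \in rels i :&: head)].

Definition head_join_hierarchical rels head : Prop :=
  forall a b : Att,
    let Ra := hj_rels_of rels head a in
    let Rb := hj_rels_of rels head b in
    [\/ Ra \subset Rb, Rb \subset Ra | [disjoint Ra & Rb]].

Definition hard_structure rels head : Prop :=
  triad_like rels head \/ strand rels head \/ ~ head_join_hierarchical rels head.

Definition remove_rels rels (A : Att) : 'I_p -> {set Att} := fun i => rels i :\ A.
Definition remove_head head (A : Att) : {set Att} := head :\ A.

End CQ.

(* A universal attribute A lies in the head and in every relation.  Hence A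
   never belongs to the attribute sets attr(Q) \ (head(Q) ∪ attr(R)) along
   which triad-like paths run, and deleting A from every relation and from the
   head preserves all inclusions, strict inclusions, equalities and nonempty
   differences between the attribute sets on which endogeneity, domination
   and strands depend.  In the head join A occurs in every relation, so its
   set of relations contains that of any other attribute: it can neither
   create nor destroy a non-hierarchical pair. *)
From mathcomp Require Import all_boot.
From Stdlib Require Import Setoid.

Set Implicit Arguments.
Unset Strict Implicit.
Unset Printing Implicit Defensive.

Section RemoveCommonElement.
Variables (T : finType) (a : T).
Implicit Types X Y : {set T}.

Lemma subsetD1D1 X Y : a \in Y -> (X :\ a \subset Y :\ a) = (X \subset Y).
Proof.
move=> aY; apply/subsetP/subsetP => XY x; last by rewrite !inE => /andP[-> /XY].
by case: (eqVneq x a) => [-> //| xa Xx]; have := XY x; rewrite !inE xa Xx; apply.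
Qed.

Lemma eqD1D1 X Y : a \in X -> a \in Y -> (X :\ a == Y :\ a) = (X == Y).
Proof. by move=> aX aY; rewrite !eqEsubset !subsetD1D1. Qed.

Lemma properD1D1 X Y : a \in X -> a \in Y -> (X :\ a \proper Y :\ a) = (X \proper Y).
Proof. by move=> aX aY; rewrite !properE !subsetD1D1. Qed.

Lemma setID1D1 X Y : (X :\ a) :&: (Y :\ a) = (X :&: Y) :\ a.
Proof. by apply/setP => x; rewrite !inE; case: (x == a); rewrite ?andbF. Qed.

Lemma setDD1D1 X Y : a \in Y -> (X :\ a) :\: (Y :\ a) = X :\: Y.
Proof. by move=> aY; apply/setP => x; rewrite !inE; case: (eqVneq x a) => [->|]; rewrite ?aY. Qed.

End RemoveCommonElement.

Section RemoveUniversalAttribute.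
Variables (Att : finType) (p : nat) (rels : 'I_p -> {set Att}) (head : {set Att}).
Variable A : Att.
Hypotheses (A_head : A \in head) (A_rels : forall i, A \in rels i).

Local Notation rels' := (remove_rels rels A).
Local Notation head' := (remove_head head A).

Lemma attrQ_remove : attrQ rels' = attrQ rels :\ A.
Proof.
apply/setP => x; rewrite /attrQ /remove_rels; apply/bigcupP/setD1P.
- by case=> i _ /setD1P[xA xi]; split=> //; apply/bigcupP; exists i.
- by case=> xA /bigcupP[i _ xi]; exists i => //; apply/setD1P.
Qed.

Lemma avoid_remove k : avoid rels' head' k = avoid rels head k.
Proof.
apply/setP => x; rewrite /avoid attrQ_remove /remove_head /remove_rels !inE.
by case: (eqVneq x A) => [->|]; rewrite ?A_head ?andbF.
Qed.

Lemma share_in_remove (S : {set Att}) :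
  A \notin S -> share_in rels' S =2 share_in rels S.
Proof.
move=> AS i j; apply: eq_existsb => x; rewrite /remove_rels !inE.
by case: (eqVneq x A) => [->|]; rewrite ?(negbTE AS).
Qed.

Lemma path_using_remove k i j :
  path_using rels' (avoid rels' head' k) i j = path_using rels (avoid rels head k) i j.
Proof.
have A_avoid : A \notin avoid rels head k by rewrite !inE A_head.
by rewrite /path_using avoid_remove (eq_connect (share_in_remove A_avoid)).
Qed.

Lemma endogenous_remove i : endogenous rels' i <-> endogenous rels i.
Proof.
rewrite /endogenous /exogenous /remove_rels.
by split=> no_sub [j ji]; apply: no_sub; exists j; rewrite properD1D1 in ji *.
Qed.

Lemma dominated_by_remove j i : dominated_by rels' head' j i = dominated_by rels head j i.
Proof.
rewrite /dominated_by /remove_rels /remove_head !subsetD1D1 //; congr [&& _, _ & _].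
apply: eq_forallb => k.
by rewrite setDD1D1 // !setID1D1 subsetD1D1 // !inE A_head A_rels.
Qed.

Lemma non_dominated_remove i : non_dominated rels' head' i = non_dominated rels head i.
Proof. by apply: eq_forallb => k; rewrite dominated_by_remove. Qed.

Lemma triad_like_remove : triad_like rels' head' <-> triad_like rels head.
Proof.
split=> -[i [j [k [distinct [endo paths]]]]]; exists i, j, k;
  rewrite ?path_using_remove in paths *; split=> //; split=> //;
  by case: endo; split; apply/endogenous_remove.
Qed.

Lemma strand_remove : strand rels' head' <-> strand rels head.
Proof.
have A_heads i : A \in head :&: rels i by rewrite inE A_head A_rels.
split=> -[i [j [ndi ndj heads shared]]]; exists i, j;
  move: ndi ndj heads shared; rewrite !non_dominated_remove;
  by rewrite /remove_rels /remove_head !setID1D1 ?eqD1D1 ?setDD1D1.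
Qed.

Lemma hj_rels_of_remove a : a != A -> hj_rels_of rels' head' a = hj_rels_of rels head a.
Proof.
by move=> aA; apply/setP => i; rewrite !inE non_dominated_remove aA.
Qed.

Lemma hj_rels_of_remove_universal : hj_rels_of rels' head' A = set0.
Proof. by apply/setP => i; rewrite !inE eqxx andbF. Qed.

Lemma hj_rels_of_sub_universal b : hj_rels_of rels head b \subset hj_rels_of rels head A.
Proof. by apply/subsetP => i; rewrite !inE A_rels A_head => /andP[-> _]. Qed.

Lemma head_join_hierarchical_remove :
  head_join_hierarchical rels' head' <-> head_join_hierarchical rels head.
Proof.
split=> hier a b /=.
- have [->|aA] := eqVneq a A; first by constructor 2; apply: hj_rels_of_sub_universal.
  have [->|bA] := eqVneq b A; first by constructor 1; apply: hj_rels_of_sub_universal.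
  by have := hier a b; rewrite /= !hj_rels_of_remove.
- have [->|aA] := eqVneq a A; first by constructor 1; rewrite hj_rels_of_remove_universal sub0set.
  have [->|bA] := eqVneq b A; first by constructor 2; rewrite hj_rels_of_remove_universal sub0set.
  by have := hier a b; rewrite /= !hj_rels_of_remove.
Qed.

End RemoveUniversalAttribute.

Theorem lemma8 (Att : finType) (p : nat) (rels : 'I_p -> {set Att})
    (head : {set Att}) (A : Att) :
  wf_query rels head ->
  distinct_attrs rels ->
  universal rels head A ->
  (hard_structure rels head <->
   hard_structure (remove_rels rels A) (remove_head head A)).
Proof.
move=> _ _ [A_head A_rels].
rewrite /hard_structure (triad_like_remove A_head A_rels) (strand_remove A_head A_rels).
by rewrite (head_join_hierarchical_remove A_head A_rels).
Qed.
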